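(* Let $\mu$ be a regular cardinal and let $\mathbf{K}$ be a $\mu$-AEC, regarded as a category. If $\lambda > \mathrm{LS}(\mathbf{K})$ is a $\mu$-closed cardinal, then there are no proper $\lambda^+$-directed boundedly $(<\lambda^+)$-presentable systems in $\mathbf{K}$.
   Context: A cardinal $\lambda$ is $\mu$-closed if $\theta^{<\mu} < \lambda$ for all $\theta<\lambda$. A $\mu$-ary abstract class is a pair $\mathbf{K}=(K,\le_{\mathbf{K}})$, $K$ a class of structures in a vocabulary $\tau(\mathbf{K})$ with symbols of arity $<\mu$, $\le_{\mathbf{K}}$ a partial order on $K$ respecting isomorphisms and extending substructure; $UM$ is the universe of $M$. It is a $\mu$-AEC if: (coherence) $M_0 \subseteq M_1 \le_{\mathbf{K}} M_2$ and $M_0 \le_{\mathbf{K}} M_2$ imply $M_0 \le_{\mathbf{K}} M_1$; (chain axioms) for every $\mu$-directed system $\langle M_i : i \in I\rangle$ (poset $I$ in which every subset of size $<\mu$ has an upper bound, $i\le j \Rightarrow M_i \le_{\mathbf{K}} M_j$), $\bigcup_i M_i\in K$, each $M_i \le_{\mathbf{K}} \bigcup_i M_i$, and $M_i \le_{\mathbf{K}} N$ for all $i$ implies $\bigcup_i M_i \le_{\mathbf{K}} N$; (LST) there is $\lambda=\lambda^{<\mu}\ge|\tau(\mathbf{K})|+\mu$ such that every $A\subseteq UM$, $M\in K$, is contained in some $M_0\le_{\mathbf{K}} M$ with $|UM_0|\le|A|^{<\mu}+\lambda$; $\mathrm{LS}(\mathbf{K})$ is the least such $\lambda$. As a category, morphisms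 $M\to N$ are maps $f$ that are isomorphisms of $M$ onto $f[M]$ with $f[M]\le_{\mathbf{K}} N$. For regular $\kappa$, an object $M$ is $\kappa$-presentable if $\mathrm{Hom}(M,-)$ preserves colimits of $\kappa$-directed diagrams; $(<\lambda)$-presentable means $\kappa$-presentable for some regular $\kappa<\lambda+\aleph_1$. A system is a diagram indexed by a poset; it is $\kappa$-directed if the poset is. A system $\langle M_i : i\in I\rangle$ with colimit $M$ and colimit maps $f_i$ is proper if there is no $i$ and $g: M\to M_i$ with $f_i g = \mathrm{id}_M$. It is boundedly $(<\lambda)$-presentable if for every $I_0\subseteq I$ that has an upper bound in $I$, the colimit of $\langle M_i : i\in I_0\rangle$ is $(<\lambda)$-presentable whenever it exists. *)

(* Cardinals are represented by types (cardinality = type up to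
   bijection); sizes are compared through injections.  A mu-AEC is presented,
   as usual in type theory, by its class of structures and its class of
   K-embeddings (the maps f : M -> N with f[M] <=_K N). *)
From Stdlib Require Import ProofIrrelevance.

Definition injective {A B : Type} (f : A -> B) : Prop :=
  forall x y, f x = f y -> x = y.

Definition cle (A B : Type) : Prop := exists f : A -> B, injective f.
Definition clt (A B : Type) : Prop := cle A B /\ ~ cle B A.

Definition infinite_card (A : Type) : Prop := cle nat A.

(* |K| is a regular (infinite) cardinal: not a union of fewer than |K| sets
   each of size < |K| (families are taken as subsets of K, which covers all
   cardinals < |K|). *)
Definition regular_card (K : Type) : Prop :=
  infinite_card K /\
  forall (P : K -> Prop) (Q : K -> K -> Prop),
    clt {x | P x} K ->
    (forall i, P i -> clt {y | Q i y} K) ->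
    clt {i : {x | P x} & {y | Q (proj1_sig i) y}} K.

(* D is an upper bound of { |X -> Theta| : |X| < |Mu| }, i.e. |D| >= Theta^{<Mu}
   (every cardinal < |Mu| is the size of a subset of Mu). *)
Definition ub_pow (Theta Mu D : Type) : Prop :=
  forall P : Mu -> Prop, clt {x | P x} Mu -> cle ({x | P x} -> Theta) D.

(* Theta^{<Mu} < |Lam|  (the sup is < Lam iff some upper bound is < Lam) *)
Definition pow_lt_lt (Theta Mu Lam : Type) : Prop :=
  exists Q : Lam -> Prop, clt {x | Q x} Lam /\ ub_pow Theta Mu {x | Q x}.

(* |X| <= Theta^{<Mu} + |Lam|: for every upper bound D of the family (it is
   enough to range over subsets of the disjoint union, which contains a copy
   of the supremum), |X| <= |D| + |Lam|. *)
Definition le_pow_lt_plus (X Theta Mu Lam : Type) : Prop :=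
  forall Q : {P : Mu -> Prop & ({x | P x} -> Theta)} -> Prop,
    ub_pow Theta Mu {s | Q s} -> cle X ({s | Q s} + Lam).

Definition mu_closed (Mu Lam : Type) : Prop :=
  forall P : Lam -> Prop, clt {x | P x} Lam -> pow_lt_lt {x | P x} Mu Lam.

Record vocab := Vocab {
  fsym : Type;                 (* function symbols (constants = nullary) *)
  rsym : Type;
  farity : fsym -> Type;       (* arity (a set of argument places) *)
  rarity : rsym -> Type }.

Record structure (t : vocab) := Struct {
  carrier : Type;
  fint : forall f : fsym t, (farity t f -> carrier) -> carrier;
  rint : forall r : rsym t, (rarity t r -> carrier) -> Prop }.
Arguments carrier {t}.
Arguments fint {t}.
Arguments rint {t}.

Definition emb {t : vocab} (M N : structure t) (h : carrier M -> carrier N) : Prop :=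
  injective h /\
  (forall f xs, h (fint M f xs) = fint N f (fun a => h (xs a))) /\
  (forall r xs, rint M r xs <-> rint N r (fun a => h (xs a))).

Definition iso {t : vocab} (M N : structure t) (h : carrier M -> carrier N) : Prop :=
  emb M N h /\ forall y, exists x, h x = y.

(* An abstract class: the class K and the relation <=_K, presented through the
   maps h with h[M] <=_K N (for M a substructure of N, the inclusion). *)
Record aclass := AClass {
  voc : vocab;
  inK : structure voc -> Prop;
  leK : forall M N : structure voc, (carrier M -> carrier N) -> Prop }.

Definition abstract_class (Mu : Type) (K : aclass) : Prop :=
  (forall f, clt (farity (voc K) f) Mu) /\
  (forall r, clt (rarity (voc K) r) Mu) /\
  (forall M N h, inK K M -> iso M N h -> inK K N) /\
  (forall M N h, leK K M N h -> inK K M /\ inK K N /\ emb M N h) /\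
  (* partial order (antisymmetry is automatic for inclusions) *)
  (forall M, inK K M -> leK K M M (fun x => x)) /\
  (forall M N P f g, leK K M N f -> leK K N P g -> leK K M P (fun x => g (f x))) /\
  (forall M M' N N' f g h, leK K M N f -> iso M' M g -> iso N N' h ->
      leK K M' N' (fun x => h (f (g x)))).

Record poset := Poset {
  pcar : Type;
  ple : pcar -> pcar -> Prop;
  ple_refl : forall i, ple i i;
  ple_trans : forall i j k, ple i j -> ple j k -> ple i k;
  ple_anti : forall i j, ple i j -> ple j i -> i = j }.

Definition directed_lt (Kap : Type) (I : poset) : Prop :=
  forall P : pcar I -> Prop, clt {i | P i} Kap ->
    exists j, forall i, P i -> ple I i j.

(* I is Lam^+-directed: every subset of size <= |Lam| (i.e. < Lam^+) has an
   upper bound *)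
Definition succ_directed (Lam : Type) (I : poset) : Prop :=
  forall P : pcar I -> Prop, cle {i | P i} Lam ->
    exists j, forall i, P i -> ple I i j.

Definition is_system (K : aclass) (I : poset) (D : pcar I -> structure (voc K))
  (d : forall i j, carrier (D i) -> carrier (D j)) : Prop :=
  (forall i, inK K (D i)) /\
  (forall i j, ple I i j -> leK K (D i) (D j) (d i j)) /\
  (forall i x, d i i x = x) /\
  (forall i j k x, ple I i j -> ple I j k -> d i k x = d j k (d i j x)).

Definition is_cocone (K : aclass) (I : poset) (D : pcar I -> structure (voc K))
  (d : forall i j, carrier (D i) -> carrier (D j))
  (L : structure (voc K)) (c : forall i, carrier (D i) -> carrier L) : Prop :=
  inK K L /\
  (forall i, leK K (D i) L (c i)) /\
  (forall i j x, ple I i j -> c j (d i j x) = c i x).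

Definition is_colimit (K : aclass) (I : poset) (D : pcar I -> structure (voc K))
  (d : forall i j, carrier (D i) -> carrier (D j))
  (L : structure (voc K)) (c : forall i, carrier (D i) -> carrier L) : Prop :=
  is_cocone K I D d L c /\
  forall (P : structure (voc K)) (h : forall i, carrier (D i) -> carrier P),
    is_cocone K I D d P h ->
    (exists u, leK K L P u /\ forall i x, u (c i x) = h i x) /\
    (forall u u', leK K L P u -> leK K L P u' ->
       (forall i x, u (c i x) = h i x) -> (forall i x, u' (c i x) = h i x) ->
       forall y, u y = u' y).

Definition is_union (K : aclass) (I : poset) (D : pcar I -> structure (voc K))
  (d : forall i j, carrier (D i) -> carrier (D j))
  (N : structure (voc K)) (g : forall i, carrier (D i) -> carrier N) : Prop :=
  (forall i, emb (D i) N (g i)) /\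
  (forall i j x, ple I i j -> g j (d i j x) = g i x) /\
  (forall y, exists i x, g i x = y).

Definition coherence (K : aclass) : Prop :=
  forall (M0 M1 M2 : structure (voc K)) h g,
    emb M0 M1 h -> leK K M1 M2 g -> leK K M0 M2 (fun x => g (h x)) ->
    leK K M0 M1 h.

Definition chain_axioms (Mu : Type) (K : aclass) : Prop :=
  forall I D d N g,
    directed_lt Mu I -> is_system K I D d -> is_union K I D d N g ->
    inK K N /\
    (forall i, leK K (D i) N (g i)) /\
    (forall P h, (forall i, leK K (D i) P (h i)) ->
       forall u, (forall i x, u (g i x) = h i x) -> leK K N P u).

(* Lam0 witnesses the Löwenheim–Skolem–Tarski axiom:
   Lam0 = Lam0^{<Mu} >= |tau(K)| + Mu, and every A contained in some
   M0 <=_K M with |M0| <= |A|^{<Mu} + Lam0.  (Lam0 <= Lam0^{<Mu} is automatic.) *)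
Definition LS_witness (Mu : Type) (K : aclass) (Lam0 : Type) : Prop :=
  ub_pow Lam0 Mu Lam0 /\
  cle ((fsym (voc K) + rsym (voc K)) + Mu) Lam0 /\
  forall M, inK K M -> forall A : carrier M -> Prop,
    exists (M0 : structure (voc K)) h,
      leK K M0 M h /\ (forall x, A x -> exists y, h y = x) /\
      le_pow_lt_plus (carrier M0) {x | A x} Mu Lam0.

Definition muAEC (Mu : Type) (K : aclass) : Prop :=
  abstract_class Mu K /\ coherence K /\ chain_axioms Mu K /\
  exists Lam0 : Type, LS_witness Mu K Lam0.

(* M is Kap-presentable: Hom(M,-) preserves colimits of Kap-directed systems
   (the canonical map colim Hom(M, D i) -> Hom(M, L) is bijective) *)
Definition presentable (K : aclass) (Kap : Type) (M : structure (voc K)) : Prop :=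
  inK K M /\
  forall I D d L c,
    directed_lt Kap I -> is_system K I D d -> is_colimit K I D d L c ->
    (forall f, leK K M L f ->
       exists i g, leK K M (D i) g /\ forall x, c i (g x) = f x) /\
    (forall i i' g g', leK K M (D i) g -> leK K M (D i') g' ->
       (forall x, c i (g x) = c i' (g' x)) ->
       exists j, ple I i j /\ ple I i' j /\ forall x, d i j (g x) = d i' j (g' x)).

(* (<Lam^+)-presentable: Kap-presentable for some regular Kap < Lam^+ + aleph_1
   = Lam^+ (Lam infinite), i.e. some regular Kap <= Lam *)
Definition presentable_lt_succ (K : aclass) (Lam : Type) (M : structure (voc K)) : Prop :=
  exists Q : Lam -> Prop, regular_card {x | Q x} /\ presentable K {x | Q x} M.

Lemma sub_refl (I : poset) (P : pcar I -> Prop) (i : {i | P i}) :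
  ple I (proj1_sig i) (proj1_sig i).
Proof. apply ple_refl. Qed.
Lemma sub_trans (I : poset) (P : pcar I -> Prop) (i j k : {i | P i}) :
  ple I (proj1_sig i) (proj1_sig j) -> ple I (proj1_sig j) (proj1_sig k) ->
  ple I (proj1_sig i) (proj1_sig k).
Proof. apply ple_trans. Qed.
Lemma sub_anti (I : poset) (P : pcar I -> Prop) (i j : {i | P i}) :
  ple I (proj1_sig i) (proj1_sig j) -> ple I (proj1_sig j) (proj1_sig i) -> i = j.
Proof.
  destruct i as [i Hi], j as [j Hj]; simpl; intros H1 H2.
  pose proof (ple_anti I i j H1 H2) as E; subst j.
  f_equal; apply proof_irrelevance.
Qed.

Definition subposet (I : poset) (P : pcar I -> Prop) : poset :=
  Poset {i | P i} (fun i j => ple I (proj1_sig i) (proj1_sig j))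
    (sub_refl I P) (sub_trans I P) (sub_anti I P).

Definition boundedly_presentable_succ (K : aclass) (Lam : Type) (I : poset)
  (D : pcar I -> structure (voc K)) (d : forall i j, carrier (D i) -> carrier (D j)) : Prop :=
  forall P : pcar I -> Prop, (exists j, forall i, P i -> ple I i j) ->
    forall L c,
      is_colimit K (subposet I P) (fun i => D (proj1_sig i))
        (fun i j => d (proj1_sig i) (proj1_sig j)) L c ->
      presentable_lt_succ K Lam L.

Definition proper (K : aclass) (I : poset) (D : pcar I -> structure (voc K))
  (d : forall i j, carrier (D i) -> carrier (D j))
  (L : structure (voc K)) (c : forall i, carrier (D i) -> carrier L) : Prop :=
  ~ exists i g, leK K L (D i) g /\ forall y, c i (g y) = y.

(* Suppose the system is proper, with colimit L. By the chain axioms L is the union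
   of the images of the D i, and no single image is all of L, since a surjective
   K-embedding splits. Running along a well-order of Lam and using Lam^+-directedness,
   pick Lam distinct points of L, each outside a stage that contains all earlier
   picks; they all land in the image of one D j, so |D j| >= Lam.

   But D j is the colimit of the one-point subsystem, hence Kap-presentable for a
   regular Kap <= Lam, and such a model has size < Lam: it is the Kap-directed union
   of its substructures that are closed under Loewenheim-Skolem hulls and of size
   below a fixed bound, so presentability makes it one of them. For Kap = Lam the bound
   is Lam itself (regular); for Kap < Lam it is a cardinal T < Lam above LS(K) + Kap
   with T^{<Mu} = T, which exists because Mu is regular and Lam is Mu-closed. *)

From HB Require Import structures.
From Stdlib Require Import Classical ClassicalEpsilon FunctionalExtensionality
  PropExtensionality ProofIrrelevance Wellfounded.
From mathcomp Require boolp wochoice.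

Set Bullet Behavior "Strict Subproofs".

(** * Comparing sizes *)

Lemma sig_ext {T : Type} (P : T -> Prop) (a b : {x | P x}) :
  proj1_sig a = proj1_sig b -> a = b.
Proof. apply eq_sig_hprop; intros; apply proof_irrelevance. Qed.

Lemma pred_ext {T : Type} (S S' : T -> Prop) : (forall x, S x <-> S' x) -> S = S'.
Proof.
  intros H; apply functional_extensionality; intros x; apply propositional_extensionality, H.
Qed.

Definition choose {A : Type} (P : A -> Prop) (H : exists x, P x) : {x | P x} :=
  constructive_indefinite_description P H.

Definition decide (P : Prop) : {P} + {~ P} := excluded_middle_informative P.

Lemma cle_refl A : cle A A.
Proof. exists (fun x => x); intros x y H; exact H. Qed.

Lemma cle_trans A B C : cle A B -> cle B C -> cle A C.
Proof. intros [f Hf] [g Hg]; exists (fun x => g (f x)); intros x y H; auto. Qed.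

Lemma cle_clt_trans A B C : cle A B -> clt B C -> clt A C.
Proof.
  intros HAB [HBC HCB]; split; [eapply cle_trans; eauto|].
  intros HCA; apply HCB; eapply cle_trans; eauto.
Qed.

Lemma cle_sig {T} (P : T -> Prop) : cle {x | P x} T.
Proof. exists (@proj1_sig _ _); intros a b E; apply sig_ext, E. Qed.

Lemma cle_sig_mono {T} (P Q : T -> Prop) : (forall x, P x -> Q x) -> cle {x | P x} {x | Q x}.
Proof.
  intros H; exists (fun a => exist _ (proj1_sig a) (H _ (proj2_sig a))).
  intros a b E; apply sig_ext; exact (f_equal (@proj1_sig _ _) E).
Qed.

Lemma cle_image {X T} (f : X -> T) : injective f -> cle X {t | exists x, f x = t}.
Proof.
  intros Hf; exists (fun x => exist _ (f x) (ex_intro _ x eq_refl)).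
  intros a b E; apply Hf; exact (f_equal (@proj1_sig _ _) E).
Qed.

Lemma cle_image_dom {X T} (f : X -> T) : cle {t | exists x, f x = t} X.
Proof.
  exists (fun t => proj1_sig (choose (fun x => f x = proj1_sig t) (proj2_sig t))).
  intros a b E; apply sig_ext.
  rewrite <- (proj2_sig (choose (fun x => f x = proj1_sig a) (proj2_sig a))),
          <- (proj2_sig (choose (fun x => f x = proj1_sig b) (proj2_sig b))), E.
  reflexivity.
Qed.

Lemma cle_pair_bool {T} (a b : T) : cle {x | x = a \/ x = b} bool.
Proof.
  exists (fun x => if decide (proj1_sig x = a) then true else false).
  intros [x Hx] [y Hy]; simpl.
  destruct (decide (x = a)), (decide (y = a)); intros E; try discriminate;
    apply sig_ext; simpl; destruct Hx, Hy; congruence.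
Qed.

Lemma infinite_not_le_bool X : infinite_card X -> ~ cle X bool.
Proof.
  intros HX Hb; destruct (cle_trans _ _ _ HX Hb) as [f Hf].
  assert (H : f 0 = f 1 \/ f 0 = f 2 \/ f 1 = f 2) by (destruct (f 0), (f 1), (f 2); auto).
  destruct H as [H|[H|H]]; apply Hf in H; discriminate.
Qed.

Lemma infinite_two X : infinite_card X -> exists a b : X, a <> b.
Proof. intros [f Hf]; exists (f 0), (f 1); intros E; apply Hf in E; discriminate. Qed.

Lemma infinite_cle_bool X : infinite_card X -> cle bool X.
Proof.
  intros HX; destruct (infinite_two X HX) as [a [b Hab]].
  exists (fun t : bool => if t then a else b); intros [|] [|]; congruence.
Qed.

Lemma infinite_clt_bool X : infinite_card X -> clt bool X.
Proof.
  intros HX; split; [apply infinite_cle_bool, HX|].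
  intros H; apply (infinite_not_le_bool X HX H).
Qed.

Lemma infinite_clt_pair {T} (a b : T) X : infinite_card X -> clt {x | x = a \/ x = b} X.
Proof.
  intros HX; apply (cle_clt_trans _ bool); [apply cle_pair_bool | apply infinite_clt_bool, HX].
Qed.


Lemma cle_fun_cod (A X Y : Type) : cle X Y -> cle (A -> X) (A -> Y).
Proof.
  intros [e He]; exists (fun f a => e (f a)); intros f g E.
  apply functional_extensionality; intros a; apply He; exact (f_equal (fun h => h a) E).
Qed.

Lemma cle_prod_pair_fun {T} (m0 m1 : T) (X : Type) :
  m0 <> m1 -> cle (X * X) ({x | x = m0 \/ x = m1} -> X).
Proof.
  intros Hm; exists (fun p k => if decide (proj1_sig k = m0) then fst p else snd p).
  intros [a b] [c d] E.
  pose proof (f_equal (fun h => h (exist (fun x => x = m0 \/ x = m1) m0 (or_introl eq_refl))) E)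
    as E0.
  pose proof (f_equal (fun h => h (exist (fun x => x = m0 \/ x = m1) m1 (or_intror eq_refl))) E)
    as E1.
  simpl in E0, E1; destruct (decide (m0 = m0)); [|congruence].
  destruct (decide (m1 = m0)); [congruence|]; simpl in *; congruence.
Qed.

Lemma clt_cle_equiv A B Y : cle A B -> cle B A -> clt Y A -> clt Y B.
Proof.
  intros HAB HBA [HYA HAY]; split; [eapply cle_trans; eauto|].
  intros HBY; apply HAY; eapply cle_trans; eauto.
Qed.

Lemma cle_sum_of_square Y (y0 y1 : Y) : y0 <> y1 -> cle (Y * Y) Y -> cle (Y + Y) Y.
Proof.
  intros Hy H; eapply cle_trans; [|exact H].
  exists (fun s => match s with inl a => (a, y0) | inr b => (b, y1) end).
  intros [a|a] [b|b] E; simpl in E; congruence.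
Qed.

Lemma cle_sigma_bound (J T : Type) (F : J -> Type) :
  cle (T * T) T -> cle J T -> (forall j, cle (F j) T) -> cle {j : J & F j} T.
Proof.
  intros HTT [jt Hjt] HF; eapply cle_trans; [|exact HTT].
  set (fj := fun j => proj1_sig (choose _ (HF j))).
  assert (Hfj : forall j, injective (fj j)) by (intros j; exact (proj2_sig (choose _ (HF j)))).
  exists (fun s => (jt (projT1 s), fj (projT1 s) (projT2 s))).
  intros [j x] [j' x'] E; simpl in E; injection E as E1 E2.
  apply Hjt in E1; subst j'; apply Hfj in E2; subst x'; reflexivity.
Qed.

(** * Well-orders *)

Record wellorder (T : Type) : Type := WellOrder {
  wlt : T -> T -> Prop;
  wlt_trans : forall x y z, wlt x y -> wlt y z -> wlt x z;
  wlt_total : forall x y, x <> y -> wlt x y \/ wlt y x;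
  wlt_wf : well_founded wlt }.
Arguments wlt {T}.
Arguments wlt_trans {T} _ {x y z}.
Arguments wlt_total {T} _ {x y}.
Arguments wlt_wf {T} _.

Module WellOrderingPrinciple.
Import ssreflect ssrfun ssrbool eqtype boolp wochoice.

Section FromWellOrder.
Variable T : Type.
(* [well_ordering_principle] is stated for eqTypes; classically every type is one. *)
Definition eqT : Type := T.
HB.instance Definition _ := gen_eqMixin eqT.
Variable R : rel eqT.
Hypothesis Rwo : well_order R.

Lemma wo_min (P : T -> Prop) : (exists x, P x) ->
  exists z, [/\ P z, forall x, P x -> R z x
              & forall z', P z' -> (forall x, P x -> R z' x) -> z' = z].
Proof.
move=> [x Px]; have [|z [[Az lbz] uz]] := Rwo [pred y : eqT | `[< P y >]].
  by exists x; rewrite inE; apply/asboolP.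
exists z; split; first by move: Az; rewrite inE => /asboolP.
  by move=> y Py; apply: lbz; rewrite inE; apply/asboolP.
move=> z' Pz' lbz'; symmetry; apply: uz; split; first by rewrite inE; apply/asboolP.
by move=> y; rewrite inE => /asboolP; apply: lbz'.
Qed.

Lemma wo_refl x : R x x.
Proof. by have [z [<- lb _]] := wo_min (eq x) (ex_intro _ x erefl); apply: lb. Qed.

Lemma wo_total x y : R x y \/ R y x.
Proof.
have [z [Pz lb _]] := wo_min (fun w => w = x \/ w = y) (ex_intro _ x (or_introl erefl)).
by case: Pz => <-; [left | right]; apply: lb; [right | left].
Qed.

Lemma wo_anti x y : R x y -> R y x -> x = y.
Proof.
move=> Rxy Ryx.
have [z [_ _ u]] := wo_min (fun w => w = x \/ w = y) (ex_intro _ x (or_introl erefl)).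
have lb w : w = x \/ w = y -> forall v, v = x \/ v = y -> R w v.
  by move=> [->|->] v [->|->]; rewrite ?wo_refl.
by rewrite (u x (or_introl erefl) (lb x (or_introl erefl)))
           (u y (or_intror erefl) (lb y (or_intror erefl))).
Qed.

Lemma wo_trans x y z : R x y -> R y z -> R x z.
Proof.
move=> Rxy Ryz.
have [m [Pm lb _]] :=
  wo_min (fun w => w = x \/ w = y \/ w = z) (ex_intro _ x (or_introl erefl)).
case: Pm => [Em|[Em|Em]]; subst m.
- by apply: lb; right; right.
- by rewrite (wo_anti _ _ Rxy (lb x (or_introl erefl))).
- by rewrite -(wo_anti _ _ Ryz (lb y (or_intror (or_introl erefl)))).
Qed.

Definition wellorder_of_well_order : wellorder T.
Proof.
refine (@WellOrder T (fun x y => R x y /\ x <> y) _ _ _).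
- move=> x y z [Rxy nxy] [Ryz nyz]; split; first exact: (wo_trans _ _ _ Rxy Ryz).
  by move=> Exz; subst z; apply: nxy; exact: (wo_anti _ _ Rxy Ryz).
- move=> x y nxy; case: (wo_total x y) => ?; [left | right]; split=> //; exact: nesym.
- move=> x; apply: NNPP => nAx.
  have [z [nAz lb _]] := wo_min (fun y => ~ Acc _ y) (ex_intro _ x nAx).
  apply: nAz; constructor=> y [Ryz nyz]; apply: NNPP => nAy.
  by apply: nyz; apply: wo_anti => //; apply: lb.
Defined.

End FromWellOrder.

Lemma wellorder_exists (T : Type) : inhabited (wellorder T).
Proof.
by have [R Rwo] := well_ordering_principle (eqT T); constructor;
  exact: wellorder_of_well_order Rwo.
Qed.

End WellOrderingPrinciple.

Section WellOrder.
Variables (T : Type) (R : wellorder T).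

Lemma wlt_irrefl x : ~ wlt R x x.
Proof.
  intros Hxx; induction (wlt_wf R x) as [x _ IH]; exact (IH x Hxx Hxx).
Qed.

Lemma wlt_least (P : T -> Prop) : (exists a, P a) ->
  exists m, P m /\ forall w, P w -> ~ wlt R w m.
Proof.
  intros [a Pa]; apply NNPP; intros Hn; revert Pa.
  induction (wlt_wf R a) as [a _ IH]; intros Pa.
  apply Hn; exists a; split; [exact Pa|]; intros w Pw Hwa; exact (IH w Hwa Pw).
Qed.

Lemma wlt_eq_of_segments x x' : (forall y, wlt R y x <-> wlt R y x') -> x = x'.
Proof.
  intros H; apply NNPP; intros Hne; destruct (wlt_total R Hne) as [h|h].
  - apply (wlt_irrefl x), H, h.
  - apply (wlt_irrefl x'), H, h.
Qed.

Lemma wlt_recursion {X : Type} (step : forall a, (forall a', wlt R a' a -> X) -> X) :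
  exists f : T -> X, forall a, f a = step a (fun a' _ => f a').
Proof.
  exists (Fix (wlt_wf R) (fun _ => X) step); intros a; rewrite Fix_eq; [reflexivity|].
  intros x f f' H; replace f' with f; [reflexivity|].
  apply functional_extensionality_dep; intros y; apply functional_extensionality; auto.
Qed.

End WellOrder.

Theorem cle_total (A B : Type) : cle A B \/ cle B A.
Proof.
  destruct (WellOrderingPrinciple.wellorder_exists A) as [R].
  destruct (classic (inhabited B)) as [[b0]|NB].
  2:{ right; exists (fun b => False_rect _ (NB (inhabits b))).
      intros x; exfalso; apply NB; constructor; exact x. }
  (* f a is a value of B not taken below a, or None once B is exhausted *)
  set (step := fun (a : A) (rec : forall a', wlt R a' a -> option B) =>
    match decide (exists b, forall a' (H : wlt R a' a), rec a' H <> Some b) with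
    | left H => Some (proj1_sig (choose _ H))
    | right _ => None end).
  destruct (wlt_recursion A R step) as [f Hf].
  destruct (classic (exists a, f a = None)) as [[a Ha]|Hn].
  - right. rewrite Hf in Ha; unfold step in Ha.
    destruct (decide _) as [H|H]; [discriminate|].
    assert (Hb : forall b, exists a', wlt R a' a /\ f a' = Some b).
    { intros b; apply NNPP; intros Hb; apply H; exists b; intros a' Ha' E; apply Hb; eauto. }
    exists (fun b => proj1_sig (choose _ (Hb b))).
    intros x y E.
    destruct (proj2_sig (choose _ (Hb x))) as [_ Ex], (proj2_sig (choose _ (Hb y))) as [_ Ey].
    rewrite E in Ex; congruence.
  - left. exists (fun a => match f a with Some b => b | None => b0 end).
    assert (HS : forall a, exists b, f a = Some b /\ forall a', wlt R a' a -> f a' <> Some b).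
    { intros a; destruct (f a) as [b|] eqn:E; [|exfalso; apply Hn; eauto].
      exists b; split; [reflexivity|].
      rewrite Hf in E; unfold step in E; destruct (decide _) as [H|H]; [|discriminate].
      destruct (choose _ H) as [b' Hb']; simpl in E; injection E as <-; exact Hb'. }
    intros x y E; apply NNPP; intros Nxy.
    destruct (HS x) as [bx [Ex Fx]], (HS y) as [by' [Ey Fy]].
    rewrite Ex, Ey in E; subst by'.
    destruct (wlt_total R Nxy) as [H|H]; [apply (Fy x H) | apply (Fx y H)]; congruence.
Qed.

Definition wellorder_pull {A B : Type} (f : A -> B) (Hf : injective f) (R : wellorder B) :
  wellorder A.
Proof.
  refine (WellOrder A (fun x y => wlt R (f x) (f y)) _ _ _).
  - intros x y z; apply wlt_trans.
  - intros x y Hxy; apply wlt_total; intros E; apply Hxy, Hf, E.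
  - apply wf_inverse_image, wlt_wf.
Defined.

(* The initial ordinal of |T|: take the least point with a segment as large as T
   and transport the order of that segment back along an injection of T. *)
Lemma wellorder_initial (T : Type) :
  exists R : wellorder T, forall z, clt {y | wlt R y z} T.
Proof.
  destruct (WellOrderingPrinciple.wellorder_exists T) as [R0].
  destruct (classic (exists x, ~ clt {y | wlt R0 y x} T)) as [Hb|Hb].
  2:{ exists R0; intros z; apply NNPP; intros Hn; apply Hb; eauto. }
  destruct (wlt_least T R0 _ Hb) as [x0 [Hx0 Hmin]].
  assert (Hc : cle T {y | wlt R0 y x0}).
  { apply NNPP; intros Hn; apply Hx0; split; [apply cle_sig | exact Hn]. }
  destruct Hc as [psi Hpsi].
  assert (Hinj : injective (fun x => proj1_sig (psi x))) by (intros a b E; apply Hpsi, sig_ext, E).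
  exists (wellorder_pull _ Hinj R0); intros z; simpl.
  assert (Hs : clt {y | wlt R0 y (proj1_sig (psi z))} T).
  { apply NNPP; intros Hn; exact (Hmin _ Hn (proj2_sig (psi z))). }
  eapply cle_clt_trans; [|exact Hs].
  exists (fun y : {y | wlt R0 (proj1_sig (psi y)) (proj1_sig (psi z))} =>
    exist _ (proj1_sig (psi (proj1_sig y))) (proj2_sig y)).
  intros a b E; apply sig_ext, Hinj; exact (f_equal (@proj1_sig _ _) E).
Qed.

(** * Sizes below a Mu-closed cardinal *)

Section BelowLam.
Variables Mu Lam : Type.
Hypothesis HMu : infinite_card Mu.
Hypothesis HLam : infinite_card Lam.
Hypothesis Hcl : mu_closed Mu Lam.

Lemma clt_as_subset X : clt X Lam -> exists S : Lam -> Prop, clt {x | S x} Lam /\ cle X {x | S x}.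
Proof.
  intros [[e He] HX]; exists (fun l => exists x, e x = l); split.
  - apply (cle_clt_trans _ X); [apply cle_image_dom | split; [exists e; exact He | exact HX]].
  - apply cle_image, He.
Qed.

Lemma clt_pow X : clt X Lam -> exists W, clt W Lam /\
  forall P : Mu -> Prop, clt {x | P x} Mu -> cle ({x | P x} -> X) W.
Proof.
  intros HX; destruct (clt_as_subset X HX) as [S [HS HXS]].
  destruct (Hcl S HS) as [Q [HQ Hub]]; exists {x | Q x}; split; [exact HQ|].
  intros P HP; eapply cle_trans; [apply cle_fun_cod, HXS | apply Hub, HP].
Qed.

Lemma clt_square X : clt X Lam -> clt (X * X) Lam.
Proof.
  intros HX; destruct (infinite_two Mu HMu) as [m0 [m1 Hm]].
  destruct (clt_pow X HX) as [W [HW HXW]].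
  apply (cle_clt_trans _ W); [|exact HW].
  eapply cle_trans; [apply (cle_prod_pair_fun m0 m1 X Hm) | apply HXW, infinite_clt_pair, HMu].
Qed.

Lemma clt_sum X Y : clt X Lam -> clt Y Lam -> clt (X + Y) Lam.
Proof.
  assert (Hsum : forall X Y, clt Y Lam -> cle X Y -> clt (X + Y) Lam).
  { clear X Y; intros X Y HY [e He].
    destruct (classic (exists b0 b1 : Y, b0 <> b1)) as [[b0 [b1 Hb]]|Hsub].
    - apply (cle_clt_trans _ (Y * Y)); [|apply clt_square, HY].
      exists (fun s => match s with inl x => (e x, b0) | inr y => (y, b1) end).
      intros [a|a] [b|b] E; simpl in E; [f_equal; apply He | | |]; congruence.
    - apply (cle_clt_trans _ bool); [|apply infinite_clt_bool, HLam].
      exists (fun s => match s with inl _ => true | inr _ => false end).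
      assert (Heq : forall y y' : Y, y = y') by (intros y y'; apply NNPP; eauto).
      intros [a|a] [b|b] E; simpl in E; try discriminate; f_equal; [apply He | ]; apply Heq. }
  intros HX HY; destruct (cle_total X Y) as [H|H]; [apply Hsum; assumption|].
  apply (cle_clt_trans _ (Y + X)); [|apply Hsum; assumption].
  exists (fun s => match s with inl x => inr x | inr y => inl y end).
  intros [a|a] [b|b] E; simpl in E; congruence.
Qed.

Lemma clt_prod X Y : clt X Lam -> clt Y Lam -> clt (X * Y) Lam.
Proof.
  intros HX HY; apply (cle_clt_trans _ ((X + Y) * (X + Y)));
    [|apply clt_square, clt_sum; assumption].
  exists (fun p => (inl (fst p), inr (snd p))); intros [a b] [c d] E; simpl in E.
  injection E; congruence.
Qed.

End BelowLam.

(* Turns a uniform bound W on all B^P (P small in Mu) into a bound of the shape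
   required by [le_pow_lt_plus]: Q picks one representative for each point of W
   that codes some (P, f). *)
Lemma ub_pow_sigma_le (Mu B W : Type) :
  (forall P : Mu -> Prop, clt {x | P x} Mu -> cle ({x | P x} -> B) W) ->
  exists Q : {P : Mu -> Prop & ({x | P x} -> B)} -> Prop,
    ub_pow B Mu {s | Q s} /\ cle {s | Q s} W.
Proof.
  intros Hyp.
  set (code := fun P (H : clt {x | P x} Mu) => proj1_sig (choose _ (Hyp P H))).
  assert (Hcode : forall P H, injective (code P H))
    by (intros P H; exact (proj2_sig (choose _ (Hyp P H)))).
  set (val := fun s : {P : Mu -> Prop & ({x | P x} -> B)} =>
    match decide (clt {x | projT1 s x} Mu) with
    | left H => Some (code (projT1 s) H (projT2 s))
    | right _ => None end).
  assert (inh : inhabited {P : Mu -> Prop & ({x | P x} -> B)}).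
  { constructor; exists (fun _ => False); intros x; exfalso; exact (proj2_sig x). }
  set (rep := fun w => epsilon inh (fun s => val s = Some w)).
  assert (Hval : forall P (H : clt {x | P x} Mu) f, val (existT _ P f) = Some (code P H f)).
  { intros P H f; unfold val; simpl; destruct (decide _) as [H'|H']; [|contradiction].
    rewrite (proof_irrelevance _ H H'); reflexivity. }
  assert (Hrep : forall P (H : clt {x | P x} Mu) f, val (rep (code P H f)) = Some (code P H f)).
  { intros P H f; apply epsilon_spec; exists (existT _ P f); apply Hval. }
  exists (fun s => exists w, val s = Some w /\ s = rep w); split.
  - intros P H.
    exists (fun f => exist (fun s => exists w, val s = Some w /\ s = rep w) (rep (code P H f))
                       (ex_intro _ (code P H f) (conj (Hrep P H f) eq_refl))).
    intros f g E; apply (f_equal (@proj1_sig _ _)) in E; simpl in E.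
    apply (Hcode P H); pose proof (Hrep P H f) as E1; pose proof (Hrep P H g) as E2.
    rewrite E, E2 in E1; congruence.
  - exists (fun s : {s | exists w, val s = Some w /\ s = rep w} =>
      proj1_sig (choose _ (proj2_sig s))).
    intros a b E; apply sig_ext.
    destruct (proj2_sig (choose _ (proj2_sig a))) as [_ Ea].
    destruct (proj2_sig (choose _ (proj2_sig b))) as [_ Eb].
    rewrite Ea, Eb, E; reflexivity.
Qed.

(** * Regular cardinals and a Mu-closed bound *)

Lemma regular_card_sigma (Kap J : Type) (F : J -> Type) : regular_card Kap ->
  clt J Kap -> (forall j, clt (F j) Kap) -> clt {j : J & F j} Kap.
Proof.
  intros Hreg [[jk Hjk] HJ] HF.
  set (fk := fun j => proj1_sig (choose _ (proj1 (HF j)))).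
  assert (Hfk : forall j, injective (fk j))
    by (intros j; exact (proj2_sig (choose _ (proj1 (HF j))))).
  set (P := fun k => exists j, jk j = k).
  set (Q := fun k y => exists j, jk j = k /\ exists x, fk j x = y).
  assert (HP : clt {k | P k} Kap).
  { eapply cle_clt_trans; [apply cle_image_dom | split; [exists jk; exact Hjk | exact HJ]]. }
  assert (HQ : forall i, P i -> clt {y | Q i y} Kap).
  { intros i [j <-]; apply (cle_clt_trans _ (F j)); [|apply HF].
    eapply cle_trans; [|apply (cle_image_dom (fk j))].
    apply cle_sig_mono; intros y [j' [Hj' Hy]]; apply Hjk in Hj'; subst j'; exact Hy. }
  eapply cle_clt_trans; [|exact (proj2 Hreg P Q HP HQ)].
  exists (fun s : {j : J & F j} =>
    existT (fun i : {k | P k} => {y | Q (proj1_sig i) y})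
      (exist P (jk (projT1 s)) (ex_intro _ (projT1 s) eq_refl))
      (exist _ (fk (projT1 s) (projT2 s))
         (ex_intro _ (projT1 s) (conj eq_refl (ex_intro _ (projT2 s) eq_refl))))).
  intros [j x] [j' x'] E.
  pose proof (f_equal (fun q : {i : {k | P k} & {y | Q (proj1_sig i) y}} =>
                         proj1_sig (projT1 q)) E) as E1; simpl in E1.
  apply Hjk in E1; subst j'.
  pose proof (f_equal (fun q : {i : {k | P k} & {y | Q (proj1_sig i) y}} =>
                         proj1_sig (projT2 q)) E) as E2; simpl in E2.
  apply Hfk in E2; subst x'; reflexivity.
Qed.

Section Regular.
Variable Mu : Type.
Hypothesis HMu : regular_card Mu.

Lemma regular_union2 (A B : Mu -> Prop) :
  clt {x | A x} Mu -> clt {x | B x} Mu -> clt {x | A x \/ B x} Mu.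
Proof.
  intros HA HB.
  apply (cle_clt_trans _ {b : bool & {x | if b then A x else B x}}).
  - exists (fun y : {x | A x \/ B x} => match decide (A (proj1_sig y)) with
      | left h => existT (fun b : bool => {x | if b then A x else B x}) true (exist _ _ h)
      | right h => existT (fun b : bool => {x | if b then A x else B x}) false
          (exist _ _ (match proj2_sig y with
                      | or_introl a => False_ind _ (h a) | or_intror b => b end))
      end).
    intros a b E; apply sig_ext.
    destruct (decide (A (proj1_sig a))), (decide (A (proj1_sig b)));
      exact (f_equal (fun q : {b : bool & {x | if b then A x else B x}} => proj1_sig (projT2 q)) E).
  - apply regular_card_sigma; [exact HMu | apply infinite_clt_bool, HMu | intros [|]; assumption].
Qed.

(* The union of the segments below the points of a small P is small by regularity;
   a point outside it and outside P bounds P. *)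
Lemma regular_bounded (R : wellorder Mu) : (forall z, clt {y | wlt R y z} Mu) ->
  forall P : Mu -> Prop, clt {x | P x} Mu -> exists z, forall p, P p -> wlt R p z.
Proof.
  intros HR P HP.
  set (U := fun y => exists p, P p /\ wlt R y p).
  assert (HU : clt {y | U y} Mu).
  { eapply cle_clt_trans;
      [|exact (regular_card_sigma Mu {x | P x} (fun p => {y | wlt R y (proj1_sig p)}) HMu HP
                 (fun p => HR (proj1_sig p)))].
    exists (fun y : {y | U y} => let q := choose _ (proj2_sig y) in
      existT (fun i : {x | P x} => {y | wlt R y (proj1_sig i)})
        (exist P (proj1_sig q) (proj1 (proj2_sig q)))
        (exist _ (proj1_sig y) (proj2 (proj2_sig q)))).
    intros a b E; apply sig_ext.
    exact (f_equal (fun q : {i : {x | P x} & {y | wlt R y (proj1_sig i)}} =>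
                      proj1_sig (projT2 q)) E). }
  destruct (classic (forall z, U z \/ P z)) as [Hall|Hz].
  - exfalso; destruct (regular_union2 U P HU HP) as [_ H]; apply H.
    exists (fun x => exist _ x (Hall x)); intros a b E; exact (f_equal (@proj1_sig _ _) E).
  - apply not_all_ex_not in Hz; destruct Hz as [z Hz]; exists z; intros p Pp.
    destruct (classic (p = z)) as [->|Hne]; [exfalso; apply Hz; right; exact Pp|].
    destruct (wlt_total R Hne) as [h|h]; [exact h|].
    exfalso; apply Hz; left; exists p; auto.
Qed.

End Regular.

(* For the initial well-order R of a regular Mu, seg_fun is a copy of X^{<Mu}:
   functions on a proper initial segment of R, padded with None. *)
Section SegmentFunctions.
Variable Mu : Type.
Hypothesis HMu : regular_card Mu.
Variable R : wellorder Mu.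
Hypothesis HR : forall z, clt {y | wlt R y z} Mu.
Variable X : Type.
Variable enc : (Mu * Mu) * option X -> X.
Hypothesis Henc : injective enc.

Definition seg_fun :=
  {p : Mu * (Mu -> option X) | forall y, ~ wlt R y (fst p) -> snd p y = None}.

Definition seg_len (t : seg_fun) : Mu := fst (proj1_sig t).
Definition seg_val (t : seg_fun) : Mu -> option X := snd (proj1_sig t).

Lemma seg_fun_ext (t t' : seg_fun) : seg_len t = seg_len t' ->
  (forall y, wlt R y (seg_len t) -> seg_val t y = seg_val t' y) -> t = t'.
Proof.
  destruct t as [[z f] Hf], t' as [[z' f'] Hf']; unfold seg_len, seg_val; simpl.
  intros <- Hv; apply sig_ext; simpl; f_equal.
  apply functional_extensionality; intros y.
  destruct (classic (wlt R y z)) as [Hy|Hy]; [exact (Hv y Hy)|].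
  pose proof (Hf y Hy) as E; pose proof (Hf' y Hy) as E'; simpl in E, E'.
  rewrite E, E'; reflexivity.
Qed.

Lemma cle_seg_fun : cle X seg_fun.
Proof.
  destruct (infinite_two Mu (proj1 HMu)) as [m0 [m1 Hm]].
  assert (Hlh : exists lo hi, wlt R lo hi) by (destruct (wlt_total R Hm); eauto).
  destruct Hlh as [lo [hi Hlo]].
  exists (fun x => exist (fun p : Mu * (Mu -> option X) =>
                            forall y, ~ wlt R y (fst p) -> snd p y = None)
    (hi, fun y => if decide (wlt R y hi) then Some x else None)
    (fun y Hy => match decide (wlt R y hi) as s return ((if s then Some x else None) = None) with
                 | left h => False_ind _ (Hy h) | right _ => eq_refl end)).
  intros x x' E; apply (f_equal (fun t : seg_fun => seg_val t lo)) in E.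
  unfold seg_val in E; simpl in E; destruct (decide (wlt R lo hi)); [congruence | contradiction].
Qed.

Definition seg_fun_codes (P : Mu -> Prop) (G : {x | P x} -> seg_fun) (t : seg_fun) :=
  forall a y o, (exists w, seg_val t w = Some (enc ((proj1_sig a, y), o))) <->
    (wlt R y (seg_len (G a)) /\ seg_val (G a) y = o).

Lemma seg_fun_codes_inj P (G G' : {x | P x} -> seg_fun) t :
  seg_fun_codes P G t -> seg_fun_codes P G' t -> G = G'.
Proof.
  intros S S'; apply functional_extensionality; intros a.
  assert (Hseg : forall y, wlt R y (seg_len (G a)) <-> wlt R y (seg_len (G' a))).
  { intros y; split; intros Hy.
    - apply (proj1 (S' a y (seg_val (G a) y))), (proj2 (S a y _)); auto.
    - apply (proj1 (S a y (seg_val (G' a) y))), (proj2 (S' a y _)); auto. }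
  apply seg_fun_ext; [apply (wlt_eq_of_segments Mu R), Hseg|].
  intros y Hy; symmetry; apply (proj1 (S' a y (seg_val (G a) y))), (proj2 (S a y _)); auto.
Qed.

Lemma seg_fun_codes_exists P (G : {x | P x} -> seg_fun) :
  clt {x | P x} Mu -> exists t, seg_fun_codes P G t.
Proof.
  intros HP.
  set (Sig := {a : {x | P x} & {y | wlt R y (seg_len (G a))}}).
  assert (HSig : clt Sig Mu)
    by exact (regular_card_sigma Mu {x | P x} _ HMu HP (fun a => HR _)).
  destruct HSig as [[e He] HSig].
  destruct (regular_bounded Mu HMu R HR (fun w => exists s, e s = w)) as [z Hz].
  { eapply cle_clt_trans; [apply cle_image_dom | split; [exists e; exact He | exact HSig]]. }
  set (code := fun s : Sig =>
    enc ((proj1_sig (projT1 s), proj1_sig (projT2 s)),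
         seg_val (G (projT1 s)) (proj1_sig (projT2 s)))).
  set (h := fun w => match decide (exists s, e s = w) with
    | left H => Some (code (proj1_sig (choose _ H)))
    | right _ => None end).
  assert (Hh : forall y, ~ wlt R y (fst (z, h)) -> snd (z, h) y = None).
  { intros y Hy; simpl; unfold h; destruct (decide _) as [H|H]; [|reflexivity].
    exfalso; apply Hy, Hz, H. }
  exists (exist _ (z, h) Hh); intros a y o; unfold seg_val; simpl; split.
  - intros [w Hw]; unfold h in Hw; destruct (decide _) as [H|H]; [|discriminate].
    destruct (proj1_sig (choose _ H)) as [a' [y' Hy']]; unfold code in Hw; simpl in Hw.
    injection Hw as E; apply Henc in E; injection E as E1 <- <-.
    replace a with a' by (apply sig_ext, E1); split; [exact Hy' | reflexivity].
  - intros [Hy <-].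
    exists (e (existT _ a (exist _ y Hy))); unfold h.
    destruct (decide _) as [H|H]; [|exfalso; apply H; eauto].
    destruct (choose _ H) as [s' Es']; simpl; apply He in Es'; subst s'; reflexivity.
Qed.

Lemma seg_fun_pow_le (P : Mu -> Prop) : clt {x | P x} Mu -> cle ({x | P x} -> seg_fun) seg_fun.
Proof.
  intros HP; exists (fun G => proj1_sig (choose _ (seg_fun_codes_exists P G HP))).
  intros G G' E.
  apply (seg_fun_codes_inj P G G' (proj1_sig (choose _ (seg_fun_codes_exists P G HP)))).
  - exact (proj2_sig (choose _ (seg_fun_codes_exists P G HP))).
  - rewrite E; exact (proj2_sig (choose _ (seg_fun_codes_exists P G' HP))).
Qed.

End SegmentFunctions.

Section ClosedCardinal.
Variables Mu Lam : Type.
Hypothesis HMu : regular_card Mu.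
Hypothesis HLam : infinite_card Lam.
Hypothesis Hcl : mu_closed Mu Lam.
Hypothesis HMuLam : clt Mu Lam.

Lemma pow_closed_above X : clt X Lam -> cle ((Mu * Mu) * option X) X ->
  exists T, cle X T /\ clt T Lam /\
    forall P : Mu -> Prop, clt {x | P x} Mu -> cle ({x | P x} -> T) T.
Proof.
  intros HX [enc Henc].
  destruct (wellorder_initial Mu) as [R HR].
  exists (seg_fun Mu R X); split; [apply (cle_seg_fun Mu HMu R)|split].
  2:{ intros P HP; apply (seg_fun_pow_le Mu HMu R HR X enc Henc P HP). }
  destruct (infinite_two Mu (proj1 HMu)) as [m _].
  assert (HoX : clt (option X) Lam).
  { apply (cle_clt_trans _ X); [|exact HX]; exists (fun o => enc ((m, m), o)).
    intros o o' E; apply Henc in E; injection E; tauto. }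
  destruct (clt_pow Mu Lam Hcl _ HoX) as [W [HW HWc]].
  apply (cle_clt_trans _ (Mu * W)); [|apply (clt_prod Mu Lam (proj1 HMu) HLam Hcl); assumption].
  set (io := fun z => proj1_sig (choose _ (HWc _ (HR z)))).
  assert (Hio : forall z, injective (io z))
    by (intros z; exact (proj2_sig (choose _ (HWc _ (HR z))))).
  exists (fun t => (seg_len Mu R X t,
                    io (seg_len Mu R X t) (fun y => seg_val Mu R X t (proj1_sig y)))).
  intros t t' E; simpl in E; injection E as Ez Ev.
  apply (seg_fun_ext Mu R X t t' Ez); intros y Hy.
  revert Ev; rewrite <- Ez; intros Ev; apply Hio in Ev.
  exact (f_equal (fun g => g (exist _ y Hy)) Ev).
Qed.

End ClosedCardinal.

(** * Unions and colimits in a Mu-AEC *)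

Lemma iso_id {t : vocab} (N : structure t) : iso N N (fun x => x).
Proof.
  split; [split; [|split]|].
  - intros a b E; exact E.
  - intros; reflexivity.
  - intros; tauto.
  - intros x; exists x; reflexivity.
Qed.

Lemma iso_of_surj_emb {t : vocab} (M N : structure t) (c : carrier M -> carrier N)
  (g : carrier N -> carrier M) :
  emb M N c -> (forall y, c (g y) = y) -> iso N M g.
Proof.
  intros [Hi [Hf Hr]] Hg; split; [split; [|split]|].
  - intros x y E; rewrite <- (Hg x), <- (Hg y), E; reflexivity.
  - intros f xs; apply Hi; rewrite Hf, Hg; f_equal.
    apply functional_extensionality; intros a; rewrite Hg; reflexivity.
  - intros r xs; rewrite Hr.
    replace (fun a => c (g (xs a))) with xs; [tauto|].
    apply functional_extensionality; intros a; symmetry; apply Hg.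
  - intros x; exists (c x); apply Hi, Hg.
Qed.

Section AbstractClass.
Variables (Mu : Type) (K : aclass).
Hypothesis HA : abstract_class Mu K.

Lemma leK_inK M N h : leK K M N h -> inK K M /\ inK K N.
Proof. destruct HA as [_ [_ [_ [H _]]]]; intros Hh; apply H in Hh; tauto. Qed.

Lemma leK_emb M N h : leK K M N h -> emb M N h.
Proof. destruct HA as [_ [_ [_ [H _]]]]; apply H. Qed.

Lemma leK_refl M : inK K M -> leK K M M (fun x => x).
Proof. destruct HA as [_ [_ [_ [_ [H _]]]]]; apply H. Qed.

Lemma leK_trans M N P f g : leK K M N f -> leK K N P g -> leK K M P (fun x => g (f x)).
Proof. destruct HA as [_ [_ [_ [_ [_ [H _]]]]]]; apply H. Qed.

Lemma leK_iso M M' N N' f g h : leK K M N f -> iso M' M g -> iso N N' h ->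
  leK K M' N' (fun x => h (f (g x))).
Proof. destruct HA as [_ [_ [_ [_ [_ [_ H]]]]]]; apply H. Qed.

Lemma leK_ext M N f f' : leK K M N f -> (forall x, f x = f' x) -> leK K M N f'.
Proof. intros H E; replace f' with f; [exact H | apply functional_extensionality, E]. Qed.

Lemma leK_surj_split M N (c : carrier M -> carrier N) :
  leK K M N c -> (forall y, exists x, c x = y) ->
  exists g, leK K N M g /\ forall y, c (g y) = y.
Proof.
  intros H Hs; set (g := fun y => proj1_sig (choose _ (Hs y))).
  assert (Hg : forall y, c (g y) = y) by (intros y; exact (proj2_sig (choose _ (Hs y)))).
  pose proof (iso_of_surj_emb M N c g (leK_emb _ _ _ H) Hg) as Iso.
  exists g; split; [|exact Hg].
  apply (leK_ext _ _ _ _ (leK_iso _ _ _ _ _ _ _ H Iso Iso)); intros y; simpl.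
  rewrite Hg; reflexivity.
Qed.

End AbstractClass.

Section Unions.
Variables (Mu : Type) (K : aclass).
Hypothesis HA : abstract_class Mu K.
Hypothesis HCh : chain_axioms Mu K.
Hypothesis HMu : infinite_card Mu.

Lemma directed_lt_pair (I : poset) : directed_lt Mu I ->
  forall i j : pcar I, exists k, ple I i k /\ ple I j k.
Proof.
  intros HD i j; destruct (HD (fun x => x = i \/ x = j)) as [k Hk].
  - apply infinite_clt_pair, HMu.
  - exists k; split; apply Hk; auto.
Qed.

Lemma union_is_colimit I D d N g :
  directed_lt Mu I -> is_system K I D d -> is_union K I D d N g -> is_colimit K I D d N g.
Proof.
  intros HD HS HU.
  destruct (HCh I D d N g HD HS HU) as [HN [HleK Huniv]].
  destruct HU as [Hemb [Hcomp Hcov]].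
  split; [split; auto|].
  intros P h [HP [HhK Hhc]].
  set (u := fun y : carrier N => let p := choose _ (Hcov y) in
              h (proj1_sig p) (proj1_sig (choose _ (proj2_sig p)))).
  assert (Hu : forall i x, u (g i x) = h i x).
  { intros i x; unfold u.
    destruct (choose _ (Hcov (g i x))) as [i' Hi']; simpl.
    destruct (choose _ Hi') as [x' Hx']; simpl.
    destruct (directed_lt_pair I HD i i') as [k [Hik Hi'k]].
    assert (E : d i k x = d i' k x').
    { apply (proj1 (Hemb k)); rewrite Hcomp, Hcomp; auto. }
    rewrite <- (Hhc i k x Hik), <- (Hhc i' k x' Hi'k), E; reflexivity. }
  split.
  - exists u; split; [apply (Huniv P h HhK u Hu) | exact Hu].
  - intros v v' _ _ Hv Hv' y; destruct (Hcov y) as [i [x <-]]; rewrite Hv, Hv'; reflexivity.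
Qed.

Section ImageUnion.
Variables (I : poset) (D : pcar I -> structure (voc K))
  (d : forall i j, carrier (D i) -> carrier (D j)).
Variables (L : structure (voc K)) (c : forall i, carrier (D i) -> carrier L).
Hypothesis HD : directed_lt Mu I.
Hypothesis HS : is_system K I D d.
Hypothesis Hcoc : is_cocone K I D d L c.

Let Hc : forall i, leK K (D i) L (c i) := proj1 (proj2 Hcoc).
Let Hcc : forall i j x, ple I i j -> c j (d i j x) = c i x := proj2 (proj2 Hcoc).

Definition in_image (y : carrier L) := exists i x, c i x = y.

Lemma in_image_fint f (xs : farity (voc K) f -> {y | in_image y}) :
  in_image (fint L f (fun a => proj1_sig (xs a))).
Proof.
  set (idx := fun a => proj1_sig (choose _ (proj2_sig (xs a)))).
  destruct (HD (fun j => exists a, idx a = j)) as [k Hk].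
  { apply (cle_clt_trans _ (farity (voc K) f)); [apply cle_image_dom | apply HA]. }
  assert (Ha : forall a, exists z, c k z = proj1_sig (xs a)).
  { intros a; destruct (proj2_sig (choose _ (proj2_sig (xs a)))) as [x Hx].
    exists (d (idx a) k x); rewrite Hcc; [exact Hx | apply Hk; eauto]. }
  exists k, (fint (D k) f (fun a => proj1_sig (choose _ (Ha a)))).
  rewrite (proj1 (proj2 (leK_emb Mu K HA _ _ _ (Hc k)))); f_equal.
  apply functional_extensionality; intros a; exact (proj2_sig (choose _ (Ha a))).
Qed.

Definition image_union : structure (voc K) :=
  Struct (voc K) {y | in_image y}
    (fun f xs => exist _ (fint L f (fun a => proj1_sig (xs a))) (in_image_fint f xs))
    (fun r xs => rint L r (fun a => proj1_sig (xs a))).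

Definition image_union_incl i (x : carrier (D i)) : carrier image_union :=
  exist in_image (c i x) (ex_intro _ i (ex_intro _ x eq_refl)).

Lemma image_union_is_union : is_union K I D d image_union image_union_incl.
Proof.
  split; [|split].
  - intros i; destruct (leK_emb Mu K HA _ _ _ (Hc i)) as [Hi [Hf Hr]]; split; [|split].
    + intros x y E; apply Hi; exact (f_equal (@proj1_sig _ _) E).
    + intros f xs; apply sig_ext; apply Hf.
    + intros r xs; apply Hr.
  - intros i j x Hij; apply sig_ext; simpl; auto.
  - intros [y [i [x Hx]]]; exists i, x; apply sig_ext; exact Hx.
Qed.

(* The colimit factors through the union of the images, which is <=_K L by the
   chain axioms; uniqueness of factorizations makes the inclusion onto. *)
Lemma colimit_covered : is_colimit K I D d L c -> forall y, in_image y.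
Proof.
  intros [[HL _] Huniv].
  destruct (HCh I D d image_union image_union_incl HD HS image_union_is_union)
    as [HUK [HgK Hun]].
  assert (HUL : leK K image_union L (@proj1_sig _ _)) by (apply (Hun L c Hc); reflexivity).
  destruct (Huniv image_union image_union_incl) as [[u [HuK Hu]] _].
  { split; [exact HUK | split; [exact HgK|]].
    intros i j x Hij; apply sig_ext; simpl; auto. }
  destruct (Huniv L c) as [_ Huniq]; [split; auto|].
  assert (E : forall y, proj1_sig (u y) = y).
  { intros y; apply (Huniq (fun y => proj1_sig (u y)) (fun y => y)).
    - apply (leK_trans Mu K HA _ _ _ _ _ HuK HUL).
    - apply (leK_refl Mu K HA _ HL).
    - intros i x; rewrite Hu; reflexivity.
    - reflexivity. }
  intros y; rewrite <- (E y); exact (proj2_sig (u y)).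
Qed.

End ImageUnion.
End Unions.

(** * Presentable models are small *)

Section Substructures.
Variables (Mu : Type) (K : aclass).
Hypothesis HA : abstract_class Mu K.
Variable M : structure (voc K).

Definition fint_closed (S : carrier M -> Prop) :=
  forall f (xs : farity (voc K) f -> carrier M), (forall a, S (xs a)) -> S (fint M f xs).

Definition substructure (S : carrier M -> Prop) (HS : fint_closed S) : structure (voc K) :=
  Struct (voc K) {x | S x}
    (fun f xs => exist _ (fint M f (fun a => proj1_sig (xs a)))
                   (HS f _ (fun a => proj2_sig (xs a))))
    (fun r xs => rint M r (fun a => proj1_sig (xs a))).

Definition is_image {M0 : structure (voc K)} (h : carrier M0 -> carrier M) (y : carrier M) :=
  exists z, h z = y.

Lemma image_fint_closed M0 h : emb M0 M h -> fint_closed (is_image h).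
Proof.
  intros [_ [Hf _]] f xs Hxs; exists (fint M0 f (fun a => proj1_sig (choose _ (Hxs a)))).
  rewrite Hf; f_equal; apply functional_extensionality; intros a.
  exact (proj2_sig (choose _ (Hxs a))).
Qed.

Lemma image_substructure_leK M0 h (HS : fint_closed (is_image h)) :
  leK K M0 M h ->
  leK K (substructure _ HS) M (@proj1_sig _ _) /\ cle {y | is_image h y} (carrier M0).
Proof.
  intros Hh; destruct (leK_emb Mu K HA _ _ _ Hh) as [Hi [Hf Hr]].
  set (hinv := fun y : {y | is_image h y} => proj1_sig (choose _ (proj2_sig y))).
  assert (Hhinv : forall y, h (hinv y) = proj1_sig y)
    by (intros y; exact (proj2_sig (choose _ (proj2_sig y)))).
  set (h' := fun z => exist (is_image h) (h z) (ex_intro _ z eq_refl)).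
  assert (Hemb : emb M0 (substructure _ HS) h').
  { split; [|split].
    - intros a b E; apply Hi; exact (f_equal (@proj1_sig _ _) E).
    - intros f xs; apply sig_ext; apply Hf.
    - intros r xs; apply Hr. }
  assert (Iso : iso (substructure _ HS) M0 hinv).
  { apply (iso_of_surj_emb M0 (substructure _ HS) h' hinv Hemb); intros y; apply sig_ext, Hhinv. }
  split.
  - apply (leK_ext K _ _ _ _ (leK_iso Mu K HA _ _ _ _ _ _ _ Hh Iso (iso_id M))); exact Hhinv.
  - exists hinv; apply Iso.
Qed.

End Substructures.

Section SmallSubstructures.
Variables (Mu : Type) (K : aclass).
Hypothesis HA : abstract_class Mu K.
Hypothesis HCh : chain_axioms Mu K.
Hypothesis HCoh : coherence K.
Hypothesis HMu : infinite_card Mu.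
Variable Lam0 : Type.
Hypothesis HLST : forall M, inK K M -> forall A : carrier M -> Prop,
  exists (M0 : structure (voc K)) h,
    leK K M0 M h /\ (forall x, A x -> exists y, h y = x) /\
    le_pow_lt_plus (carrier M0) {x | A x} Mu Lam0.
Variable Kap : Type.
(* Smallness is abstract so that the same argument serves for Kap < Lam and Kap = Lam. *)
Variable small : Type -> Prop.
Hypothesis small_le : forall X Y, cle X Y -> small Y -> small X.
Hypothesis small_union : forall (J : Type) (F : J -> Type), (clt J Kap \/ clt J Mu) ->
  (forall j, small (F j)) -> small {j : J & F j}.
Hypothesis small_hull : forall B, small B ->
  exists Q : {P : Mu -> Prop & ({x | P x} -> B)} -> Prop,
    ub_pow B Mu {s | Q s} /\ small ({s | Q s} + Lam0).
Hypothesis small_unit : small unit.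

Variable M : structure (voc K).
Hypothesis HM : inK K M.

Lemma small_single (A : carrier M -> Prop) x : (forall y, A y -> y = x) -> small {y | A y}.
Proof.
  intros HA'; apply (small_le _ unit); [|exact small_unit].
  exists (fun _ => tt); intros [a Ha] [b Hb] _; apply sig_ext; simpl.
  rewrite (HA' a Ha), (HA' b Hb); reflexivity.
Qed.

Definition small_sub (S : carrier M -> Prop) :=
  fint_closed K M S /\
  (forall HS : fint_closed K M S, leK K (substructure K M S HS) M (@proj1_sig _ _)) /\
  small {x | S x} /\ (exists x, S x).

Lemma small_sub_hull (A : carrier M -> Prop) : small {x | A x} -> (exists x, A x) ->
  exists S, small_sub S /\ forall x, A x -> S x.
Proof.
  intros HSA [x0 Hx0].
  destruct (HLST M HM A) as [M0 [h [Hh [HAh Hsz]]]].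
  pose proof (image_fint_closed K M M0 h (leK_emb Mu K HA _ _ _ Hh)) as HS.
  exists (is_image K M h); split; [|exact HAh].
  split; [exact HS | split; [| split]].
  - intros HS'; apply (image_substructure_leK Mu K HA M M0 h HS' Hh).
  - destruct (small_hull _ HSA) as [Q [HQ HQS]].
    apply (small_le _ (carrier M0)); [apply (image_substructure_leK Mu K HA M M0 h HS Hh)|].
    exact (small_le _ _ (Hsz Q HQ) HQS).
  - exists x0; exact (HAh x0 Hx0).
Qed.

Definition small_sub_t := {S : carrier M -> Prop | small_sub S}.

Lemma small_sub_le_refl (i : small_sub_t) : forall x, proj1_sig i x -> proj1_sig i x.
Proof. auto. Qed.

Lemma small_sub_le_trans (i j k : small_sub_t) :
  (forall x, proj1_sig i x -> proj1_sig j x) -> (forall x, proj1_sig j x -> proj1_sig k x) ->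
  forall x, proj1_sig i x -> proj1_sig k x.
Proof. auto. Qed.

Lemma small_sub_le_anti (i j : small_sub_t) :
  (forall x, proj1_sig i x -> proj1_sig j x) -> (forall x, proj1_sig j x -> proj1_sig i x) ->
  i = j.
Proof. intros H1 H2; apply sig_ext, pred_ext; split; auto. Qed.

Definition small_sub_poset : poset :=
  Poset small_sub_t (fun i j => forall x, proj1_sig i x -> proj1_sig j x)
    small_sub_le_refl small_sub_le_trans small_sub_le_anti.

Definition small_sub_str (s : small_sub_t) : structure (voc K) :=
  substructure K M (proj1_sig s) (proj1 (proj2_sig s)).

Definition small_sub_point (s : small_sub_t) : carrier (small_sub_str s) :=
  let H := proj2 (proj2 (proj2 (proj2_sig s))) in
  exist _ (proj1_sig (choose _ H)) (proj2_sig (choose _ H)).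

(* The inclusion of s into s'; off the poset order it is an arbitrary junk map. *)
Definition small_sub_incl (s s' : small_sub_t) (x : carrier (small_sub_str s)) :
  carrier (small_sub_str s') :=
  match decide (proj1_sig s' (proj1_sig x)) with
  | left h => exist _ (proj1_sig x) h
  | right _ => small_sub_point s'
  end.

Lemma small_sub_incl_val s s' x : (forall y, proj1_sig s y -> proj1_sig s' y) ->
  proj1_sig (small_sub_incl s s' x) = proj1_sig x.
Proof.
  intros H; unfold small_sub_incl; destruct (decide _) as [h|h]; [reflexivity|].
  exfalso; apply h, H, (proj2_sig x).
Qed.

Lemma small_sub_leK (s : small_sub_t) : leK K (small_sub_str s) M (@proj1_sig _ _).
Proof. apply (proj1 (proj2 (proj2_sig s))). Qed.

Lemma small_sub_is_system : is_system K small_sub_poset small_sub_str small_sub_incl.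
Proof.
  split; [|split; [|split]].
  - intros s; apply (leK_inK Mu K HA _ _ _ (small_sub_leK s)).
  - intros s s' Hss'; simpl in Hss'.
    apply (HCoh (small_sub_str s) (small_sub_str s') M (small_sub_incl s s') (@proj1_sig _ _)).
    + destruct (leK_emb Mu K HA _ _ _ (small_sub_leK s)) as [Hi [Hf Hr]]; split; [|split].
      * intros a b E; apply Hi.
        rewrite <- (small_sub_incl_val s s' a), <- (small_sub_incl_val s s' b), E; auto.
      * intros f xs; apply sig_ext; rewrite small_sub_incl_val; [simpl; f_equal|exact Hss'].
        apply functional_extensionality; intros a; symmetry; apply small_sub_incl_val, Hss'.
      * intros r xs; simpl.
        replace (fun a => proj1_sig (small_sub_incl s s' (xs a))) with (fun a => proj1_sig (xs a));
          [tauto|].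
        apply functional_extensionality; intros a; symmetry; apply small_sub_incl_val, Hss'.
    + apply small_sub_leK.
    + apply (leK_ext K _ _ _ _ (small_sub_leK s)); intros x; rewrite small_sub_incl_val; auto.
  - intros s x; apply sig_ext, small_sub_incl_val; auto.
  - intros i j k x Hij Hjk; apply sig_ext; rewrite !small_sub_incl_val; simpl in *; eauto.
Qed.

Lemma small_sub_union_small (P : small_sub_t -> Prop) : clt {s | P s} Kap \/ clt {s | P s} Mu ->
  small {x | exists s, P s /\ proj1_sig s x}.
Proof.
  intros HP.
  apply (small_le _ {s : {s | P s} & {x | proj1_sig (proj1_sig s) x}}).
  - exists (fun x => let p := choose _ (proj2_sig x) in
      existT (fun s : {s | P s} => {x | proj1_sig (proj1_sig s) x})
        (exist _ (proj1_sig p) (proj1 (proj2_sig p)))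
        (exist _ (proj1_sig x) (proj2 (proj2_sig p)))).
    intros a b E; apply sig_ext.
    exact (f_equal (fun q : {s : {s | P s} & {x | proj1_sig (proj1_sig s) x}} =>
                      proj1_sig (projT2 q)) E).
  - apply small_union; [exact HP|]; intros [s Ps]; apply (proj2_sig s).
Qed.

Lemma small_sub_directed (m0 : carrier M) (Z : Type) :
  (forall J : Type, clt J Z -> clt J Kap \/ clt J Mu) -> directed_lt Z small_sub_poset.
Proof.
  intros HZ P HP.
  destruct (classic (exists s, P s)) as [[s0 Ps0]|Hemp].
  - destruct (proj2 (proj2 (proj2 (proj2_sig s0)))) as [x0 Hx0].
    destruct (small_sub_hull _ (small_sub_union_small P (HZ _ HP))
                (ex_intro _ x0 (ex_intro _ s0 (conj Ps0 Hx0)))) as [S [HS HAS]].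
    exists (exist _ S HS); intros s Ps x Hx; apply HAS; exists s; auto.
  - destruct (small_sub_hull (fun x => x = m0) (small_single _ m0 (fun y H => H))
                (ex_intro _ m0 eq_refl)) as [S [HS _]].
    exists (exist _ S HS); intros s Ps; exfalso; eauto.
Qed.

Lemma small_sub_is_union :
  is_union K small_sub_poset small_sub_str small_sub_incl M (fun s => @proj1_sig _ _).
Proof.
  split; [|split].
  - intros s; apply (leK_emb Mu K HA _ _ _ (small_sub_leK s)).
  - intros i j x Hij; apply small_sub_incl_val, Hij.
  - intros y; destruct (small_sub_hull (fun x => x = y) (small_single _ y (fun y H => H))
                          (ex_intro _ y eq_refl)) as [S [HS Hy]].
    exists (exist _ S HS), (exist _ y (Hy y eq_refl)); reflexivity.
Qed.

(* M is the Kap-directed colimit of its small substructures, so by presentability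
   the identity of M factors through one of them. *)
Lemma presentable_small : presentable K Kap M -> small (carrier M).
Proof.
  intros [_ Hp].
  destruct (classic (inhabited (carrier M))) as [[m0]|Hempty].
  2:{ apply (small_le _ unit); [|exact small_unit].
      exists (fun _ => tt); intros x; exfalso; apply Hempty; constructor; exact x. }
  assert (HDM : directed_lt Mu small_sub_poset) by (apply (small_sub_directed m0); auto).
  pose proof (union_is_colimit Mu K HCh HMu _ _ _ _ _ HDM small_sub_is_system small_sub_is_union)
    as Hcol.
  destruct (Hp small_sub_poset small_sub_str small_sub_incl M (fun s => @proj1_sig _ _))
    as [Hf _]; [apply (small_sub_directed m0); auto | exact small_sub_is_system | exact Hcol |].
  destruct (Hf (fun x => x) (leK_refl Mu K HA M HM)) as [s [g [_ Hgx]]].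
  apply (small_le _ {x | proj1_sig s x}); [|apply (proj2_sig s)].
  exists g; intros a b E; rewrite <- (Hgx a), <- (Hgx b), E; reflexivity.
Qed.

End SmallSubstructures.

Section PresentableSize.
Variables (Mu : Type) (K : aclass) (Lam Lam0 : Type).
Hypothesis HMu : regular_card Mu.
Hypothesis HA : abstract_class Mu K.
Hypothesis HCh : chain_axioms Mu K.
Hypothesis HCoh : coherence K.
Hypothesis Hcl : mu_closed Mu Lam.
Hypothesis HLS : LS_witness Mu K Lam0.
Hypothesis HL0 : clt Lam0 Lam.

Lemma LS_witness_ge_mu : cle Mu Lam0.
Proof.
  destruct HLS as [_ [H _]]; eapply cle_trans; [|exact H].
  exists inr; intros a b E; injection E; auto.
Qed.

Let HMuInf : infinite_card Mu := proj1 HMu.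

Lemma mu_clt_lam : clt Mu Lam.
Proof. exact (cle_clt_trans _ _ _ LS_witness_ge_mu HL0). Qed.

Lemma lam_infinite : infinite_card Lam.
Proof. exact (cle_trans _ _ _ HMuInf (proj1 mu_clt_lam)). Qed.

Lemma LS_witness_square : cle (Lam0 * Lam0) Lam0.
Proof.
  destruct (infinite_two Mu HMuInf) as [m0 [m1 Hm]].
  eapply cle_trans; [apply (cle_prod_pair_fun m0 m1 _ Hm)|].
  apply (proj1 HLS), infinite_clt_pair, HMuInf.
Qed.

Lemma LS_witness_absorbs (Kap : Type) (k0 : Kap) :
  cle ((Mu * Mu) * option (Lam0 * Kap)) (Lam0 * Kap).
Proof.
  destruct LS_witness_square as [pi Hpi], LS_witness_ge_mu as [iM HiM].
  destruct (infinite_two Lam0 (cle_trans _ _ _ HMuInf LS_witness_ge_mu)) as [l0 [l1 Hl]].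
  set (opt := fun o : option Lam0 => match o with None => pi (l0, l0) | Some l => pi (l1, l) end).
  assert (Hopt : forall o o', opt o = opt o' -> o = o').
  { intros [a|] [b|] E; apply Hpi in E; congruence. }
  set (split := fun o : option (Lam0 * Kap) =>
    match o with None => (None, k0) | Some (l, k) => (Some l, k) end).
  assert (Hsplit : forall o o', split o = split o' -> o = o')
    by (intros [[l k]|] [[l' k']|]; simpl; congruence).
  exists (fun p => (pi (iM (fst (fst p)), pi (iM (snd (fst p)), opt (fst (split (snd p))))),
                    snd (split (snd p)))).
  intros [[u y] o] [[u' y'] o'] E; simpl in E.
  injection E as E Ek; apply Hpi in E; injection E as Eu E; apply Hpi in E.
  injection E as Ey E; apply HiM in Eu; apply HiM in Ey; apply Hopt in E.
  replace o' with o; [congruence|].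
  apply Hsplit; destruct (split o), (split o'); simpl in *; congruence.
Qed.

Lemma presentable_clt_small_rank (Kap : Type) (M : structure (voc K)) :
  regular_card Kap -> clt Kap Lam -> presentable K Kap M -> clt (carrier M) Lam.
Proof.
  intros HKap HKL Hp.
  destruct (infinite_two Kap (proj1 HKap)) as [k0 _].
  destruct (pow_closed_above Mu Lam HMu lam_infinite Hcl mu_clt_lam (Lam0 * Kap)
              (clt_prod Mu Lam HMuInf lam_infinite Hcl _ _ HL0 HKL) (LS_witness_absorbs Kap k0))
    as [T [[xt Hxt] [HT Hpow]]].
  destruct (infinite_two Lam0 (cle_trans _ _ _ HMuInf LS_witness_ge_mu)) as [l0 [l1 Hl]].
  assert (HTT : cle (T * T) T).
  { destruct (infinite_two Mu HMuInf) as [m0 [m1 Hm]].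
    eapply cle_trans; [apply (cle_prod_pair_fun m0 m1 _ Hm)|].
    apply Hpow, infinite_clt_pair, HMuInf. }
  assert (HT2 : cle (T + T) T).
  { apply (cle_sum_of_square _ (xt (l0, k0)) (xt (l1, k0)) ); [|exact HTT].
    intros E; apply Hxt in E; injection E; exact Hl. }
  assert (HL0T : cle Lam0 T)
    by (exists (fun l => xt (l, k0)); intros a b E; apply Hxt in E; injection E; auto).
  assert (HKT : cle Kap T)
    by (exists (fun k => xt (l0, k)); intros a b E; apply Hxt in E; injection E; auto).
  apply (cle_clt_trans _ T); [|exact HT].
  apply (presentable_small Mu K HA HCh HCoh HMuInf Lam0 (proj2 (proj2 HLS)) Kap
           (fun Y => cle Y T));
    [intros; eapply cle_trans; eauto | | |
     exists (fun _ => xt (l0, k0)); intros [] [] _; reflexivity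
    | apply Hp | exact Hp].
  - intros J F HJ HF; apply (cle_sigma_bound J T F HTT); [|exact HF].
    destruct HJ as [[H _]|[H _]]; eapply cle_trans; [exact H | exact HKT | exact H |].
    exact (cle_trans _ _ _ LS_witness_ge_mu HL0T).
  - intros B HB; destruct (ub_pow_sigma_le Mu B T) as [Q [HQ HQT]].
    { intros P HP; eapply cle_trans; [apply cle_fun_cod, HB | apply Hpow, HP]. }
    exists Q; split; [exact HQ|]; eapply cle_trans; [|exact HT2].
    destruct HQT as [q Hq], HL0T as [lt Hlt].
    exists (fun s => match s with inl a => inl (q a) | inr b => inr (lt b) end).
    intros [a|a] [b|b] E; simpl in E; [f_equal; apply Hq | | | f_equal; apply Hlt]; congruence.
Qed.

Lemma presentable_clt_top_rank (Kap : Type) (M : structure (voc K)) :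
  regular_card Kap -> cle Kap Lam -> cle Lam Kap -> presentable K Kap M -> clt (carrier M) Lam.
Proof.
  intros HKap HKL HLK Hp.
  apply (presentable_small Mu K HA HCh HCoh HMuInf Lam0 (proj2 (proj2 HLS)) Kap
           (fun Y => clt Y Lam));
    [intros; eapply cle_clt_trans; eauto | | |
     apply (cle_clt_trans _ bool); [exists (fun _ => true); intros [] [] _; reflexivity
                                   | apply infinite_clt_bool, lam_infinite]
    | apply Hp | exact Hp].
  - intros J F HJ HF; apply (clt_cle_equiv Kap); [exact HKL | exact HLK|].
    apply regular_card_sigma; [exact HKap | | intros j; apply (clt_cle_equiv Lam); auto].
    destruct HJ as [HJ|HJ]; [exact HJ|].
    apply (clt_cle_equiv Lam); [exact HLK | exact HKL|].
    exact (cle_clt_trans _ _ _ (proj1 HJ) mu_clt_lam).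
  - intros B HB; destruct (clt_pow Mu Lam Hcl B HB) as [W [HW HBW]].
    destruct (ub_pow_sigma_le Mu B W HBW) as [Q [HQ HQW]].
    exists Q; split; [exact HQ|].
    apply (clt_sum Mu Lam HMuInf lam_infinite Hcl); [|exact HL0].
    exact (cle_clt_trans _ _ _ HQW HW).
Qed.

Lemma presentable_lt_succ_clt (M : structure (voc K)) :
  presentable_lt_succ K Lam M -> clt (carrier M) Lam.
Proof.
  intros [Qk [HKap Hp]].
  destruct (classic (cle Lam {x | Qk x})) as [HLK|HKL].
  - exact (presentable_clt_top_rank _ M HKap (cle_sig Qk) HLK Hp).
  - exact (presentable_clt_small_rank _ M HKap (conj (cle_sig Qk) HKL) Hp).
Qed.

End PresentableSize.

(** * Proper systems *)

Lemma succ_directed_bound (Lam J : Type) (I : poset) (f : J -> pcar I) :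
  succ_directed Lam I -> cle J Lam -> exists j, forall x, ple I (f x) j.
Proof.
  intros Hsd HJ; destruct (Hsd (fun i => exists x, f x = i)) as [j Hj].
  - exact (cle_trans _ _ _ (cle_image_dom f) HJ).
  - exists j; intros x; apply Hj; eauto.
Qed.

(* Along a well-order of Lam, pick each time a point outside the stage bounding all
   earlier picks: the picks are distinct and all lie in one later stage. *)
Lemma succ_directed_cover_large (Lam : Type) (I : poset) (Y : Type) (A : pcar I -> Y -> Prop) :
  succ_directed Lam I ->
  (forall i j y, ple I i j -> A i y -> A j y) ->
  (forall y, exists i, A i y) ->
  (forall i, exists y, ~ A i y) ->
  exists j, cle Lam {y | A j y}.
Proof.
  intros Hsd Hmono Hcov Hproper.
  destruct (WellOrderingPrinciple.wellorder_exists Lam) as [R].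
  set (idx := fun y => proj1_sig (choose _ (Hcov y))).
  assert (Hidx : forall y, A (idx y) y) by (intros y; exact (proj2_sig (choose _ (Hcov y)))).
  assert (Hstage : forall a (rec : forall a', wlt R a' a -> Y),
             exists j, forall a' H, ple I (idx (rec a' H)) j).
  { intros a rec.
    destruct (succ_directed_bound Lam {a' | wlt R a' a} I
                (fun s => idx (rec (proj1_sig s) (proj2_sig s))) Hsd (cle_sig _)) as [j Hj].
    exists j; intros a' H; exact (Hj (exist _ a' H)). }
  set (stage := fun a rec => proj1_sig (choose _ (Hstage a rec))).
  destruct (wlt_recursion Lam R (fun a rec => proj1_sig (choose _ (Hproper (stage a rec)))))
    as [phi Hphi].
  assert (Hout : forall a, ~ A (stage a (fun a' _ => phi a')) (phi a)).
  { intros a; rewrite (Hphi a); exact (proj2_sig (choose _ (Hproper _))). }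
  assert (Hin : forall a' a, wlt R a' a -> A (stage a (fun a' _ => phi a')) (phi a')).
  { intros a' a H; apply (Hmono _ _ _ (proj2_sig (choose _ (Hstage a _)) a' H)), Hidx. }
  assert (Hinj : injective phi).
  { intros a b E; apply NNPP; intros Hab; destruct (wlt_total R Hab) as [H|H].
    - apply (Hout b); rewrite <- E; exact (Hin a b H).
    - apply (Hout a); rewrite E; exact (Hin b a H). }
  destruct (succ_directed_bound Lam Lam I (fun a => idx (phi a)) Hsd (cle_refl Lam)) as [j Hj].
  exists j; exists (fun a => exist _ (phi a) (Hmono _ _ _ (Hj a) (Hidx (phi a)))).
  intros a b E; apply Hinj; exact (f_equal (@proj1_sig _ _) E).
Qed.

Lemma singleton_colimit (K : aclass) (I : poset) (D : pcar I -> structure (voc K))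
  (d : forall i j, carrier (D i) -> carrier (D j)) (j : pcar I) :
  is_system K I D d ->
  is_colimit K (subposet I (fun i => i = j)) (fun i => D (proj1_sig i))
    (fun i i' => d (proj1_sig i) (proj1_sig i')) (D j) (fun i => d (proj1_sig i) j).
Proof.
  intros [HK [Hle [Hid Hcomp]]].
  split; [split; [|split]|].
  - apply HK.
  - intros [i Hi]; simpl; subst i; apply Hle, ple_refl.
  - intros [i Hi] [i' Hi'] x _; simpl; subst; rewrite Hid; reflexivity.
  - intros P h [HP [HhK Hhc]]; split.
    + exists (h (exist _ j eq_refl)); split; [apply (HhK (exist _ j eq_refl))|].
      intros [i Hi] x; simpl; subst i; rewrite Hid; reflexivity.
    + intros v v' _ _ Hv Hv' y.
      pose proof (Hv (exist _ j eq_refl) y) as E; pose proof (Hv' (exist _ j eq_refl) y) as E'.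
      simpl in E, E'; rewrite Hid in E, E'; congruence.
Qed.

Theorem lemma6p5 (Mu : Type) (K : aclass) (Lam : Type) :
  regular_card Mu ->
  muAEC Mu K ->
  (* Lam > LS(K): some LST witness (hence the least one) is < Lam *)
  (exists Q : Lam -> Prop, LS_witness Mu K {x | Q x} /\ clt {x | Q x} Lam) ->
  mu_closed Mu Lam ->
  forall (I : poset) (D : pcar I -> structure (voc K))
         (d : forall i j, carrier (D i) -> carrier (D j)),
    is_system K I D d ->
    succ_directed Lam I ->
    boundedly_presentable_succ K Lam I D d ->
    forall L c, is_colimit K I D d L c -> ~ proper K I D d L c.
Proof.
  intros HMu [HA [HCoh [HCh _]]] [Q0 [HLS HQ0]] Hcl I D d HS Hsd Hbp L c Hcol Hprop.
  assert (HDmu : directed_lt Mu I).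
  { intros P HP; apply Hsd.
    exact (cle_trans _ _ _ (proj1 HP) (proj1 (mu_clt_lam Mu K Lam _ HLS HQ0))). }
  assert (Hsmall : forall j, clt (carrier (D j)) Lam).
  { intros j; apply (presentable_lt_succ_clt Mu K Lam _ HMu HA HCh HCoh Hcl HLS HQ0).
    apply (Hbp (fun i => i = j)) with (c := fun i => d (proj1_sig i) j);
      [exists j; intros i ->; apply ple_refl | apply singleton_colimit, HS]. }
  destruct (succ_directed_cover_large Lam I (carrier L) (fun j y => exists x, c j x = y) Hsd)
    as [j Hj].
  - intros i i' y Hii' [x <-]; exists (d i i' x); apply (proj2 (proj2 (proj1 Hcol))), Hii'.
  - exact (colimit_covered Mu K HA HCh I D d L c HDmu HS (proj1 Hcol) Hcol).
  - intros i; apply NNPP; intros Hsurj; apply Hprop.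
    destruct (leK_surj_split Mu K HA (D i) L (c i) (proj1 (proj2 (proj1 Hcol)) i)) as [g Hg].
    + intros y; apply NNPP; intros Hy; apply Hsurj; exists y; exact Hy.
    + exists i, g; exact Hg.
  - exact (proj2 (Hsmall j) (cle_trans _ _ _ Hj (cle_image_dom (c j)))).
Qed.
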